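(* Let $(T,\mathbf{m})$ be a tree with vertex capacities. If $(T,\mathbf{m})$ admits an inversion function, then the type-selected Coxeter-like complex $\Delta_{(T,\mathbf{m})}$ is shellable.
   Context: A tree with capacities $(T,\mathbf{m})$ is a finite tree $T$ together with a nonnegative integer $\mathrm{cap}(v)$ for each vertex $v$; let $N=\sum_{v}\mathrm{cap}(v)$. The complex $\Delta_{(T,\mathbf{m})}$ (the Coxeter-like complex of $S_N/(S_{\mathrm{cap}(v_1)}\times\cdots\times S_{\mathrm{cap}(v_n)})$ with generators the transpositions corresponding to edges of $T$) has as faces the following data: a set $E^C(F)$ of edges of $T$ to delete, and an assignment to each connected component $C$ of the resulting forest of exactly $\sum_{v\in C}\mathrm{cap}(v)$ labels from $[N]$, each label assigned to exactly one component; $\dim F=|E^C(F)|-1$, and $\sigma\subseteq\tau$ iff $\sigma$ is obtained from $\tau$ by merging neighboring components (uniting their label sets). It is a simplicial complex whose facets correspond to labellings of $T$ assigning $\mathrm{cap}(v)$ labels to each vertex $v$. To a face $F$ associate the labelled tree $T(F)$ whose vertices are the components of $T$ minus $E^C(F)$ (labelled by their label sets, with capacity the sum of the capacities of their vertices) and whose edges are the edges of $E^C(F)$. An inversion function for $(T,\mathbf{m})$ is a function $I$ assigning to each face $F$ a set $I(F)$ of pairs of neighboring vertices of $T(F)$ (its inversion pairs), such that for each face $\tau$ and neighboring components $C_1,C_2$ of $T(\tau)$ there is a unique redistribution of the labels collectively assigned to $C_1,C_2$ (keeping the number of labels on each) for which the resulting $\tau'$ has $(C_1,C_2)\notin I(\tau')$;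 for $(i,j)\in I(\tau)$ write $(i,j)\tau$ for this redistributed labelling. On facets (labellings of $T$) set $(i,j)\tau\prec_{weak}\tau$ for each $(i,j)\in I(\tau)$ with $i,j$ neighbors in $T$. The following must hold: (1) each face $F$ is contained in a unique facet which is inversion-free on its restriction to each component of $F$ (i.e. has no inversion pair of vertices lying in a common component of $T$ minus $E^C(F)$); (2) the transitive closure of $\prec_{weak}$ is a partial order; (3) these properties also hold on the restriction to any subforest of $T$. A shelling of a simplicial complex is a total order $F_1,\dots,F_r$ of its facets such that for each $k>1$, $\overline{F_k}\cap\bigcup_{j<k}\overline{F_j}$ is a pure codimension-one subcomplex of $\overline{F_k}$, where $\overline{F}$ is the complex of all faces of $F$. *)

From mathcomp Require Import all_boot.
From Stdlib Require Import Relations.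

Set Implicit Arguments.
Unset Strict Implicit.
Unset Printing Implicit Defensive.

(* [face] selects the faces, [le] is face inclusion, [fd F] = dim F + 1 *)
(* (number of vertices of the simplex F).  Facets = maximal faces.     *)
(* The closure of a facet is the down-set of faces below it, so        *)
(*   closure(F_k) ∩ ⋃_{j<k} closure(F_j) = {G face | G<=F_k, ∃j<k G<=F_j}*)
(* and "pure of codimension one in closure(F_k)" means every maximal   *)
(* element of that subcomplex has dimension dim F_k - 1.               *)
Section Shelling.
Variables (T : finType) (face : pred T) (le : rel T) (fd : T -> nat).

Definition is_max_face (F : T) : bool :=
  face F && [forall G, (face G && le F G) ==> (G == F)].

Definition shell_inter (prev : seq T) (Fk : T) (G : T) : bool :=
  [&& face G, le G Fk & has (fun Fj => le G Fj) prev].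

Definition is_shelling (s : seq T) : Prop :=
  uniq s /\ (forall F, (F \in s) = is_max_face F) /\
  forall s1 Fk s2, s = s1 ++ Fk :: s2 -> s1 != [::] ->
    forall G, shell_inter s1 Fk G ->
      [forall H, (shell_inter s1 Fk H && le G H) ==> (H == G)] ->
      fd G + 1 = fd Fk.

Definition shellable : Prop := exists s, is_shelling s.
End Shelling.

Section Coxeter.
Variables (V : finType) (E : {set {set V}}) (cap : V -> nat).

Definition adj (D : {set {set V}}) : rel V :=
  fun x y => (x != y) && ([set x; y] \in E :\: D).

Definition is_tree : Prop :=
  (forall e, e \in E -> #|e| = 2) /\
  (forall x y : V, connect (adj set0) x y) /\
  #|E|.+1 = #|V|.

Definition comp (D : {set {set V}}) (v : V) : {set V} :=
  [set w | connect (adj D) v w].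

Definition Nlab : nat := \sum_(v : V) cap v.

(* a face: (E^C(F), map sending each label in [N] to its component) *)
Definition face_t : Type := ({set {set V}} * {ffun 'I_Nlab -> {set V}})%type.

Definition is_face (F : face_t) : bool :=
  [&& F.1 \subset E,
      [forall l, [exists v, F.2 l == comp F.1 v]] &
      [forall v, #|[set l | F.2 l == comp F.1 v]| == \sum_(w in comp F.1 v) cap w]].

(* dim F + 1 = |E^C(F)| *)
Definition fdim (F : face_t) : nat := #|F.1|.

(* S ⊆ T : S obtained from T by merging neighbouring components,
   i.e. E^C(S) ⊆ E^C(T) and each label's T-component lies in its
   S-component (label sets are united). *)
Definition face_le (S T : face_t) : bool :=
  (S.1 \subset T.1) && [forall l, T.2 l \subset S.2 l].

(* facets = labellings of T (all edges deleted) *)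
Definition is_facet (F : face_t) : bool := is_face F && (F.1 == E).

(* Inversion functions.  A pair of neighbouring vertices of T(F) is    *)
(* identified with the edge of E^C(F) joining them, so I F is a set of *)
(* edges (contained in E^C(F)).                                        *)
Variable I : face_t -> {set {set V}}.

(* tau' is obtained from tau by redistributing the labels of the two
   components joined by the edge e (same E^C, labels of all other
   components unchanged; label counts are forced by is_face). *)
Definition redistrib (tau tau' : face_t) (e : {set V}) : bool :=
  [&& is_face tau', tau'.1 == tau.1 &
      [forall l, [disjoint e & tau.2 l] ==> (tau'.2 l == tau.2 l)]].

Definition inv_pairs_ok : Prop :=
  forall tau, is_face tau -> I tau \subset tau.1.

Definition unique_redistribution : Prop :=
  forall tau e, is_face tau -> e \in tau.1 ->
    exists! tau', redistrib tau tau' e && (e \notin I tau').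

(* weak order step on facets, using only edges in A:
   weak_step A tau' tau  means  tau' = (i,j)tau  ≺_weak  tau *)
Definition weak_step (A : {set {set V}}) (tau' tau : face_t) : Prop :=
  is_facet tau /\ is_facet tau' /\
  exists2 e, e \in I tau :&: A & redistrib tau tau' e && (e \notin I tau').

(* properties (1) and (2), for the restriction to the faces satisfying
   [above], with active edge set A *)
Definition props_restr (A : {set {set V}}) (above : face_t -> bool) : Prop :=
  (forall tau, is_face tau -> above tau ->
     exists! G, [&& is_facet G, face_le tau G &
                    [disjoint I G :&: A & E :\: tau.1]]) /\
  (forall tau, above tau ->
     ~ clos_trans face_t
         (fun x y => above x /\ above y /\ weak_step A x y) tau tau).

Definition is_inversion_function : Prop :=
  [/\ inv_pairs_ok, unique_redistribution,
      props_restr E (fun _ => true) &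
      (* (3): restriction to the subforest T minus E^C(sigma), for every
         face sigma, with the label sets of its components fixed *)
      forall sigma, is_face sigma ->
        props_restr (E :\: sigma.1) (face_le sigma)].

End Coxeter.

From Pilot Require Import Defs.
From Stdlib Require Import Relations.
From mathcomp Require Import all_boot.

Set Implicit Arguments.
Unset Strict Implicit.
Unset Printing Implicit Defensive.

(* Order the facets by a linear extension of the weak order (their number of
   weak-order predecessors).  Let G be a maximal face of closure(F_k) that also
   lies below an earlier facet.  If F_k had no inversion edge inside a component
   of G, then F_k would be the inversion-free facet above G, which every other
   facet above G -- in particular the earlier one -- dominates in the weak order;
   impossible.  So F_k has an inversion edge e inside a component of G; undoing
   it gives an earlier facet that still contains the face of F_k obtained by
   merging across e alone, and maximality forces G to be that codimension-one
   face. *)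

Lemma set2_card2 (T : finType) (A : {set T}) x y :
  #|A| = 2 -> x \in A -> y \in A -> x != y -> [set x; y] = A.
Proof.
move=> A2 xA yA neq_xy; apply/eqP; rewrite eqEcard cards2 neq_xy A2 leqnn andbT.
by apply/subsetP => z; rewrite !inE => /orP[] /eqP ->.
Qed.

Lemma sorted_cat_cons_le (T : eqType) (leT : rel T) s1 y s2 :
  transitive leT -> sorted leT (s1 ++ y :: s2) ->
  {in s1, forall x, leT x y} /\ {in s2, forall x, leT y x}.
Proof.
move=> leT_tr; rewrite sorted_pairwise // pairwise_cat allrel_consr /=.
by case/and3P => /andP[/allP le_s1 _] _ /andP[/allP le_s2 _].
Qed.

Section Components.
Variables (V : finType) (E : {set {set V}}).
Implicit Types (D : {set {set V}}) (x y : V).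

Lemma adj_sym D : symmetric (adj E D).
Proof. by move=> x y; rewrite /adj eq_sym setUC. Qed.

Lemma comp_self D x : x \in Defs.comp E D x.
Proof. by rewrite inE connect0. Qed.

Lemma comp_eq D x y : y \in Defs.comp E D x -> Defs.comp E D x = Defs.comp E D y.
Proof.
rewrite inE => xy; apply/setP => z; rewrite !inE.
exact: (same_connect (sym_connect_sym (adj_sym D)) xy).
Qed.

Lemma eq_comp D x y : (Defs.comp E D x == Defs.comp E D y) = (x \in Defs.comp E D y).
Proof. by apply/eqP/idP => [<-|/comp_eq ->]; rewrite ?comp_self. Qed.

Lemma comp_all_edges x : Defs.comp E E x = [set x].
Proof.
apply/setP => z; rewrite !inE; apply/idP/eqP => [|->]; last exact: connect0.
case/connectP => [[|y p]] /= => [_ -> //|].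
by rewrite {1}/adj setDv inE andbF.
Qed.

Lemma comp_subset D D' x : D' \subset D -> Defs.comp E D x \subset Defs.comp E D' x.
Proof.
move=> sDD'; apply/subsetP => y; rewrite !inE; apply: connect_sub => a b.
rewrite /adj inE => /and3P[neq_ab abD abE]; apply: connect1.
by rewrite /adj neq_ab inE abE andbT; apply: contra abD => /(subsetP sDD').
Qed.

End Components.

Section Faces.
Variables (V : finType) (E : {set {set V}}) (cap : V -> nat).
Implicit Types (F G X tau : face_t cap) (D : {set {set V}}) (e : {set V}).

Lemma face_edges F : is_face E F -> F.1 \subset E.
Proof. by case/and3P. Qed.

Lemma face_label F l : is_face E F -> exists v, F.2 l = Defs.comp E F.1 v.
Proof. by case/and3P => _ /forallP/(_ l)/existsP[v /eqP ->] _; exists v. Qed.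

Lemma facet_label F l : is_facet E F -> exists v, F.2 l = [set v].
Proof.
case/andP => faceF /eqP F1; have [v ->] := face_label l faceF.
by exists v; rewrite F1 comp_all_edges.
Qed.

Lemma facet_card_label F v : is_facet E F -> #|[set l | F.2 l == [set v]]| = cap v.
Proof.
case/andP => /and3P[_ _ /forallP/(_ v)/eqP] + /eqP F1.
by rewrite F1 comp_all_edges big_set1.
Qed.

Lemma facet_le_eq F G : is_facet E F -> is_facet E G -> face_le F G -> F = G.
Proof.
move=> facetF facetG /andP[_ /forallP FG].
apply: injective_projections.
  by case/andP: facetF => _ /eqP ->; case/andP: facetG => _ /eqP ->.
apply/ffunP => l.
have [v fl] := facet_label l facetF; have [w gl] := facet_label l facetG.
by move: (FG l); rewrite fl gl sub1set inE => /eqP ->.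
Qed.

Lemma facet_max_face F : is_facet E F -> is_max_face (@is_face V E cap) (@face_le V cap) F.
Proof.
move=> facetF; rewrite /is_max_face (proj1 (andP facetF)); apply/forallP => G.
apply/implyP => /andP[faceG FG]; apply/eqP/esym/facet_le_eq => //.
rewrite /is_facet faceG eqEsubset face_edges //=.
by case/andP: facetF FG => _ /eqP <- /andP[].
Qed.

Lemma redistrib_facet X X' e : redistrib E X X' e -> is_facet E X -> is_facet E X'.
Proof.
by case/and3P => faceX' /eqP X'X _ /andP[_ /eqP XE]; rewrite /is_facet faceX' X'X XE eqxx.
Qed.

Lemma redistrib_label X X' e l :
  redistrib E X X' e -> [disjoint e & X.2 l] -> X'.2 l = X.2 l.
Proof. by case/and3P => _ _ /forallP/(_ l)/implyP fix_l /fix_l/eqP. Qed.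

(* Redistribution keeps the number of labels on each vertex outside e, so a
   label sitting on e cannot leave e. *)
Lemma redistrib_label_edge X X' e l v w :
  is_facet E X -> is_facet E X' -> redistrib E X X' e ->
  X.2 l = [set v] -> X'.2 l = [set w] -> v \in e -> w \in e.
Proof.
move=> facetX facetX' red Xl X'l ve; apply: contraT => we.
have sub_w : [set l | X.2 l == [set w]] \subset [set l | X'.2 l == [set w]].
  apply/subsetP => k; rewrite !inE => /eqP Xk.
  by rewrite (redistrib_label red) Xk // disjoint_sym disjoints1.
have /eqP/setP/(_ l) : [set l | X.2 l == [set w]] == [set l | X'.2 l == [set w]].
  by rewrite eqEcard sub_w (facet_card_label _ facetX) (facet_card_label _ facetX') leqnn.
rewrite !inE Xl X'l eqxx => /eqP/set1_inj vw.
by rewrite -vw ve in we.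
Qed.

Lemma redistrib_face_le tau X X' e :
  #|e| = 2 -> e \in E -> e \notin tau.1 -> is_face E tau ->
  is_facet E X -> is_facet E X' -> redistrib E X X' e ->
  face_le tau X -> face_le tau X'.
Proof.
move=> e2 eE etau facetau facetX facetX' red /andP[_ /forallP tauX].
have X'E : X'.1 = E by case/andP: facetX' => _ /eqP.
rewrite /face_le X'E face_edges //=; apply/forallP => l.
have [v Xl] := facet_label l facetX; have [w X'l] := facet_label l facetX'.
have [dis | ] := boolP [disjoint e & X.2 l].
  by rewrite (redistrib_label red dis); exact: tauX.
rewrite Xl disjoint_sym disjoints1 negbK => ve.
have we := redistrib_label_edge facetX facetX' red Xl X'l ve.
have [u tau_l] := face_label l facetau.
move: (tauX l); rewrite Xl X'l tau_l !sub1set => /comp_eq ->.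
have [<-|neq_vw] := eqVneq v w; first exact: comp_self.
rewrite inE; apply: connect1.
by rewrite /adj neq_vw (set2_card2 e2 ve we neq_vw) inE etau eE.
Qed.

(* The face of closure(F) whose deleted edges are D. *)
Definition coarsen F D : face_t cap :=
  (D, [ffun l => \bigcup_(v in F.2 l) Defs.comp E D v]).

Lemma coarsen_label F D l v : F.2 l = [set v] -> (coarsen F D).2 l = Defs.comp E D v.
Proof. by rewrite ffunE => ->; rewrite big_set1. Qed.

Lemma coarsen_face F D : is_facet E F -> D \subset E -> is_face E (coarsen F D).
Proof.
move=> facetF sDE; apply/and3P; split => //.
  apply/forallP => l; have [v Fl] := facet_label l facetF.
  by apply/existsP; exists v; rewrite (coarsen_label _ Fl).
apply/forallP => u /=; apply/eqP; set C := Defs.comp E D u.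
transitivity (\sum_(w in C) #|[set l | F.2 l == [set w]]|); last first.
  by apply: eq_bigr => w _; rewrite (facet_card_label _ facetF).
rewrite -sum1_card; under [RHS]eq_bigr => w _ do rewrite -sum1_card big_mkcond.
rewrite exchange_big big_mkcond /=; apply: eq_bigr => l _.
have [v Fl] := facet_label l facetF.
rewrite inE (coarsen_label _ Fl) eq_comp -/C.
under eq_bigr => w _ do rewrite inE Fl (inj_eq set1_inj).
have [vC|vC] := boolP (v \in C).
  rewrite (bigD1 v) //= eqxx big1 // => w /andP[_].
  by rewrite eq_sym => /negbTE ->.
by rewrite big1 // => w wC; case: eqP => // vw; rewrite vw wC in vC.
Qed.

Lemma coarsen_le F D : is_facet E F -> D \subset E -> face_le (coarsen F D) F.
Proof.
move=> facetF sDE; apply/andP; split; first by case/andP: facetF => _ /eqP ->.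
apply/forallP => l; have [v Fl] := facet_label l facetF.
by rewrite (coarsen_label _ Fl) Fl sub1set comp_self.
Qed.

Lemma le_coarsen F G D :
  is_facet E F -> is_face E G -> face_le G F -> G.1 \subset D ->
  face_le G (coarsen F D).
Proof.
move=> facetF faceG /andP[_ /forallP GF] sGD; apply/andP; split => //.
apply/forallP => l; have [v Fl] := facet_label l facetF.
have [u Gl] := face_label l faceG.
move: (GF l); rewrite Fl Gl sub1set (coarsen_label _ Fl) => /comp_eq ->.
exact: comp_subset.
Qed.

Lemma coarsen_edge_face F e : is_facet E F -> is_face E (coarsen F (E :\ e)).
Proof. by move=> facetF; apply: coarsen_face; rewrite ?subsetDl. Qed.

Lemma coarsen_edge_le F e : is_facet E F -> face_le (coarsen F (E :\ e)) F.
Proof. by move=> facetF; apply: coarsen_le; rewrite ?subsetDl. Qed.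

Lemma coarsen_edge_le_redistrib F X e :
  #|e| = 2 -> e \in E -> is_facet E F -> redistrib E F X e ->
  face_le (coarsen F (E :\ e)) X.
Proof.
move=> e2 eE facetF red.
apply: (redistrib_face_le e2 eE _ _ facetF (redistrib_facet red facetF) red).
- by rewrite !inE eqxx.
- exact: coarsen_edge_face.
- exact: coarsen_edge_le.
Qed.

Lemma fdim_coarsen_edge F e : e \in E -> fdim (coarsen F (E :\ e)) + 1 = #|E|.
Proof. by move=> eE; rewrite /fdim [RHS](cardsD1 e) eE addnC. Qed.

End Faces.

Section WeakOrder.
Variables (V : finType) (E : {set {set V}}) (cap : V -> nat).
Variable I : face_t cap -> {set {set V}}.
Implicit Types (F G H X Y Z tau : face_t cap).

Definition weak_stepb : rel (face_t cap) := fun X Y =>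
  [&& is_facet E Y, is_facet E X &
      [exists e, [&& e \in I Y :&: E, redistrib E Y X e & e \notin I X]]].

Definition weak_below X Y := [exists Z, weak_stepb X Z && connect weak_stepb Z Y].

Definition weak_rank Y := #|[set X | weak_below X Y]|.

Lemma weak_stepb_weak_step X Y : weak_stepb X Y -> weak_step E I E X Y.
Proof.
case/and3P => facetY facetX /existsP[e /and3P[eI red eX]].
by do 2!split => //; exists e; rewrite ?red.
Qed.

Lemma weak_stepb_below X Y : weak_stepb X Y -> weak_below X Y.
Proof. by move=> XY; apply/existsP; exists Y; rewrite XY connect0. Qed.

Lemma weak_below_trans : transitive weak_below.
Proof.
move=> Y X Z /existsP[X1 /andP[XX1 X1Y]] /existsP[Y1 /andP[YY1 Y1Z]].
apply/existsP; exists X1; rewrite XX1.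
exact: connect_trans X1Y (connect_trans (connect1 YY1) Y1Z).
Qed.

Lemma connect_weak_below X Y : connect weak_stepb X Y -> X != Y -> weak_below X Y.
Proof.
case/connectP => [[|Z p]] /= => [_ -> |/andP[XZ Zp] Y_last _]; first by rewrite eqxx.
by apply/existsP; exists Z; rewrite XZ; apply/connectP; exists p.
Qed.

Hypothesis edges2 : forall e, e \in E -> #|e| = 2.
Hypothesis redistribution_unique : unique_redistribution E I.
Hypothesis inversion_props : props_restr E I E (fun _ => true).

Lemma weak_below_irrefl X : ~~ weak_below X X.
Proof.
have [_ /(_ X isT) acyclic] := inversion_props.
apply/negP => /existsP[Z /andP[XZ /connectP[p Zp X_last]]]; apply: acyclic.
rewrite {2}X_last; elim: p X Z XZ Zp {X_last} => [|Y p IHp] X Z XZ /=.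
  by move=> _; apply: t_step; do 2!split => //; exact: weak_stepb_weak_step.
case/andP => ZY Yp; apply: t_trans (IHp Z Y ZY Yp).
by apply: t_step; do 2!split => //; exact: weak_stepb_weak_step.
Qed.

Lemma weak_rank_lt X Y : weak_below X Y -> weak_rank X < weak_rank Y.
Proof.
move=> XY; apply/proper_card/properP; split.
  by apply/subsetP => Z; rewrite !inE => ZX; exact: weak_below_trans ZX XY.
by exists X; rewrite !inE ?XY ?weak_below_irrefl.
Qed.

Lemma inversion_step X e :
  is_facet E X -> e \in I X -> e \in E ->
  exists2 X', weak_stepb X' X & redistrib E X X' e.
Proof.
move=> facetX eI eE; have eX : e \in X.1 by case/andP: facetX => _ /eqP ->.
have [X' [/andP[red eX'] _]] := redistribution_unique (proj1 (andP facetX)) eX.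
exists X' => //; rewrite /weak_stepb facetX (redistrib_facet red facetX).
by apply/existsP; exists e; rewrite inE eI eE red eX'.
Qed.

(* Undo inversions inside the components of tau; each undo descends the weak
   order, so the process terminates. *)
Lemma inversion_free_facet_below tau X :
  is_face E tau -> is_facet E X -> face_le tau X ->
  exists2 Y, [&& is_facet E Y, face_le tau Y & [disjoint I Y :&: E & E :\: tau.1]]
           & connect weak_stepb Y X.
Proof.
move=> facetau; have [n] := ubnP (weak_rank X).
elim: n X => [//|n IHn] X rankX facetX tauX.
have [free|] := boolP [disjoint I X :&: E & E :\: tau.1].
  by exists X; rewrite ?facetX ?tauX ?free.
rewrite -setI_eq0 => /set0Pn[e]; rewrite !inE => /andP[/andP[eI eE] /andP[etau _]].
have [X' X'X red] := inversion_step facetX eI eE.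
have facetX' := redistrib_facet red facetX.
have rankX' : weak_rank X' < n := leq_trans (weak_rank_lt (weak_stepb_below X'X)) rankX.
have tauX' := redistrib_face_le (edges2 eE) eE etau facetau facetX facetX' red tauX.
have [Y freeY YX'] := IHn X' rankX' facetX' tauX'.
by exists Y => //; exact: connect_trans YX' (connect1 X'X).
Qed.

Lemma inversion_in_common_face G Fj Fk :
  is_face E G -> is_facet E Fj -> is_facet E Fk -> Fk != Fj ->
  face_le G Fj -> face_le G Fk -> weak_rank Fj <= weak_rank Fk ->
  ~~ [disjoint I Fk :&: E & E :\: G.1].
Proof.
move=> faceG facetFj facetFk neq_kj GFj GFk rank_jk; apply/negP => freeFk.
have [Y /and3P[facetY GY freeY] YFj] := inversion_free_facet_below faceG facetFj GFj.
have [G_free [_ free_unique]] := inversion_props.1 G faceG isT.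
have YFk : Y = Fk.
  by rewrite -(free_unique Y) ?facetY ?GY // (free_unique Fk) ?facetFk ?GFk.
move: YFj; rewrite YFk => /connect_weak_below/(_ neq_kj)/weak_rank_lt.
by rewrite ltnNge rank_jk.
Qed.

Lemma max_faceE F : is_max_face (@is_face V E cap) (@face_le V cap) F = is_facet E F.
Proof.
apply/idP/idP; last exact: facet_max_face.
case/andP => faceF /forallP maxF.
have [G [/and3P[facetG FG _] _]] := inversion_props.1 F faceF isT.
by move: (maxF G); rewrite (proj1 (andP facetG)) FG => /eqP <-.
Qed.

Definition weak_shelling : seq (face_t cap) :=
  sort (fun X Y => weak_rank X <= weak_rank Y) (enum [pred F | is_facet E F]).

Lemma mem_weak_shelling F : (F \in weak_shelling) = is_facet E F.
Proof. by rewrite mem_sort mem_enum. Qed.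

Lemma weak_shelling_uniq : uniq weak_shelling.
Proof. by rewrite sort_uniq enum_uniq. Qed.

Lemma weak_shelling_split s1 Fk s2 :
  weak_shelling = s1 ++ Fk :: s2 ->
  {in s1, forall X, weak_rank X <= weak_rank Fk} /\
  {in s2, forall X, weak_rank Fk <= weak_rank X}.
Proof.
move=> shellE.
have := sort_sorted (fun X Y => leq_total (weak_rank X) (weak_rank Y))
  (enum [pred F | is_facet E F]).
rewrite -/weak_shelling shellE; apply: sorted_cat_cons_le => Y X Z; exact: leq_trans.
Qed.

Lemma weak_shelling_prefix s1 Fk s2 X :
  weak_shelling = s1 ++ Fk :: s2 -> is_facet E X -> weak_rank X < weak_rank Fk ->
  X \in s1.
Proof.
move=> shellE facetX rankX; have [_ ge_s2] := weak_shelling_split shellE.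
move: facetX; rewrite -mem_weak_shelling shellE mem_cat inE.
case/or3P => [//|/eqP eXFk|/ge_s2]; first by rewrite eXFk ltnn in rankX.
by rewrite leqNgt rankX.
Qed.

Lemma weak_shelling_codim1 s1 Fk s2 G :
  weak_shelling = s1 ++ Fk :: s2 ->
  shell_inter (@is_face V E cap) (@face_le V cap) s1 Fk G ->
  [forall H, (shell_inter (@is_face V E cap) (@face_le V cap) s1 Fk H && face_le G H)
               ==> (H == G)] ->
  fdim G + 1 = fdim Fk.
Proof.
move=> shellE shared_G maxG; have [le_s1 _] := weak_shelling_split shellE.
have facet_of X : X \in s1 ++ Fk :: s2 -> is_facet E X by rewrite -shellE mem_weak_shelling.
have facetFk : is_facet E Fk by apply: facet_of; rewrite mem_cat mem_head orbT.
have FkE : Fk.1 = E by case/andP: facetFk => _ /eqP.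
case/and3P: shared_G => faceG GFk /hasP[Fj Fj_s1 GFj].
have facetFj : is_facet E Fj by apply: facet_of; rewrite mem_cat Fj_s1.
have neq_kj : Fk != Fj.
  apply: contraTneq Fj_s1 => <-.
  by move: weak_shelling_uniq; rewrite shellE cat_uniq /= => /and3P[_ /norP[]].
have := inversion_in_common_face faceG facetFj facetFk neq_kj GFj GFk (le_s1 _ Fj_s1).
rewrite -setI_eq0 => /set0Pn[e]; rewrite !inE => /andP[/andP[eI eE] /andP[eG _]].
have [X' X'Fk red] := inversion_step facetFk eI eE.
have X'_s1 : X' \in s1.
  apply: weak_shelling_prefix shellE (redistrib_facet red facetFk) _.
  exact: weak_rank_lt (weak_stepb_below X'Fk).
pose H := coarsen E Fk (E :\ e).
have shared_H : shell_inter (@is_face V E cap) (@face_le V cap) s1 Fk H.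
  rewrite /shell_inter coarsen_edge_face ?coarsen_edge_le //=; apply/hasP; exists X' => //.
  exact: coarsen_edge_le_redistrib (edges2 eE) eE facetFk red.
have GH : face_le G H.
  apply: (le_coarsen facetFk faceG GFk); apply/subsetP => f fG.
  rewrite !inE (subsetP (face_edges faceG)) // andbT.
  by apply: contraNneq eG => <-.
move: (forallP maxG H); rewrite shared_H GH => /eqP <-.
by rewrite fdim_coarsen_edge // /fdim FkE.
Qed.

Lemma weak_shelling_is_shelling :
  is_shelling (@is_face V E cap) (@face_le V cap) (@fdim V cap) weak_shelling.
Proof.
split; first exact: weak_shelling_uniq.
split=> [F | s1 Fk s2 shellE _ G]; first by rewrite mem_weak_shelling max_faceE.
exact: weak_shelling_codim1 shellE.
Qed.

End WeakOrder.

Theorem mainTheorem3 (V : finType) (E : {set {set V}}) (cap : V -> nat)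
    (I : @face_t V cap -> {set {set V}}) :
  is_tree E -> @is_inversion_function V E cap I ->
  shellable (@is_face V E cap) (@face_le V cap) (@fdim V cap).
Proof.
move=> [edges2 _] [_ redistribution_unique inversion_props _].
by exists (weak_shelling E I); exact: weak_shelling_is_shelling.
Qed.
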